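(* Let $a$ be a positive integer and $n\in\mathbb{N}$ (with $0\in\mathbb{N}$). For $x>0$, $x\neq 1$, \[ \frac{d^n}{dx^n}\left(\log_x a\right)=\frac{d^n}{dx^n}\left(\frac{\ln a}{\ln x}\right)=(\log_x a)\,\frac{(-1)^n n!}{x^n}\sum_{\sum_i i y_{k,i}=n}\frac{\left(\sum_i y_{k,i}\right)!}{(\ln x)^{\sum_i y_{k,i}}}\prod_{i=1}^{n}\frac{1}{i^{y_{k,i}}\,y_{k,i}!}. \]
   Context: The sum runs over all partitions of $n$, each represented as a tuple $(y_{k,1},\ldots,y_{k,n})$ of non-negative integers with $\sum_{i=1}^n i\,y_{k,i}=n$; sums $\sum_i$ run over $i=1,\ldots,n$. For $n=0$ the only partition is the zero partition. *)

From Stdlib Require Import Reals Factorial.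
From Coquelicot Require Import Coquelicot.
From mathcomp Require Import ssreflect ssrfun ssrbool eqtype ssrnat seq fintype finfun bigop.

Definition logb (x a : R) : R := (ln a / ln x)%R.

(* A partition of n is encoded as y : {ffun 'I_n -> 'I_n.+1}, where y i is the
   multiplicity y_{i+1} of the part i+1 (each multiplicity is at most n, so the
   bound n.+1 loses nothing), subject to  sum_i (i+1) * y_{i+1} = n. *)
Definition is_partition {n : nat} (y : {ffun 'I_n -> 'I_n.+1}) : bool :=
  (\sum_(i < n) i.+1 * y i)%N == n.

Definition nparts {n : nat} (y : {ffun 'I_n -> 'I_n.+1}) : nat :=
  (\sum_(i < n) (y i : nat))%N.

Definition partition_sum (n : nat) (x : R) : R :=
  \big[Rplus/0%R]_(y : {ffun 'I_n -> 'I_n.+1} | is_partition y)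
    (INR (Factorial.fact (nparts y)) / pow (ln x) (nparts y) *
     \big[Rmult/1%R]_(i < n)
        Rinv (pow (INR i.+1) (y i) * INR (Factorial.fact (y i))))%R.

(* Put u = 1/ln x.  Since d/dx (x^-n u^(m+1)) = -x^-(n+1) (n u^(m+1) + (m+1) u^(m+2)),
   induction on n shows that the n-th derivative of 1/ln x is
   (-1)^n x^-n sum_m [n,m] m! u^(m+1), the coefficients obeying the recurrence
   [n+1,m+1] = n [n,m+1] + [n,m] of the unsigned Stirling numbers of the first
   kind.  On the other side, the sum A(s,m) of prod_i 1/(i^y_i y_i!) over the
   partitions y of s with m parts is [s,m]/s!, Cauchy's count of permutations by
   cycle type: weighting each partition by s = sum_i i y_i and deleting one
   part i gives s A(s,m+1) = sum_(j<s) A(j,m), a recurrence that [s,m]/s!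
   satisfies as well. *)
From Stdlib Require Import Reals Factorial Lra.
From Coquelicot Require Import Coquelicot.
From HB Require Import structures.
From mathcomp Require ssreflect ssrfun ssrbool eqtype ssrnat seq fintype finfun bigop zify.

(* ssrnat is imported only inside this module: at top level its [<] would
   change the meaning of [(0 < a)%nat] in the final statement. *)
Module LogbDerivative.
Import ssreflect ssrfun ssrbool eqtype ssrnat seq fintype finfun bigop zify.

HB.instance Definition _ := Monoid.isComLaw.Build R 0 Rplus
  (fun x y z => esym (Rplus_assoc x y z)) Rplus_comm Rplus_0_l.
HB.instance Definition _ := Monoid.isComLaw.Build R 1 Rmult
  (fun x y z => esym (Rmult_assoc x y z)) Rmult_comm Rmult_1_l.
HB.instance Definition _ := Monoid.isMulLaw.Build R 0 Rmult Rmult_0_l Rmult_0_r.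
HB.instance Definition _ := Monoid.isAddLaw.Build R Rmult Rplus
  Rmult_plus_distr_r Rmult_plus_distr_l.

Lemma INR_sum (I : Type) (r : seq I) (P : pred I) (f : I -> nat) :
  INR (\sum_(i <- r | P i) f i) = \big[Rplus/0]_(i <- r | P i) INR (f i).
Proof. exact: (big_morph INR plus_INR). Qed.

Lemma INR_S_neq0 (n : nat) : INR n.+1 <> 0.
Proof. exact: not_0_INR. Qed.

Fixpoint stirling1 (n m : nat) : nat :=
  match n, m with
  | 0, 0 => 1
  | 0, S _ => 0
  | S _, 0 => 0
  | S n', S m' => n' * stirling1 n' m + stirling1 n' m'
  end%N.

Lemma stirling1SS (n m : nat) :
  stirling1 n.+1 m.+1 = (n * stirling1 n m.+1 + stirling1 n m)%N.
Proof. by []. Qed.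

Lemma stirling1_small (n m : nat) : (n < m)%N -> stirling1 n m = 0%N.
Proof.
elim: n m => [|n IH] [|m] //= lt_nm.
rewrite (IH m.+1) ?(IH m) ?muln0 //; exact: ltnW.
Qed.

Lemma stirling1_div_fact_sum (s m : nat) :
  INR s * (INR (stirling1 s m.+1) / INR (fact s)) =
  \big[Rplus/0]_(j < s) (INR (stirling1 j m) / INR (fact j)).
Proof.
elim: s => [|s IH]; first by rewrite big_ord0 Rmult_0_l.
rewrite big_ord_recr -IH stirling1SS fact_simpl plus_INR !mult_INR /=.
have := INR_fact_neq_0 s; have := INR_S_neq0 s.
rewrite -/(INR s.+1) => ? ?; field; split => //.
Qed.

Section PartitionSums.
Variable n : nat.
Local Notation multiplicities := {ffun 'I_n -> 'I_n.+1}.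
Implicit Types (y : multiplicities) (i : 'I_n).

Definition weight y : nat := \sum_(i < n) i.+1 * y i.

(* [zinv y] is [1 / z_y], where [z_y = prod_i i^y_i y_i!] is the order of the
   centraliser of a permutation of cycle type [y]. *)
Definition zinv y : R :=
  \big[Rmult/1]_(i < n) / (INR i.+1 ^ y i * INR (fact (y i))).

Definition zinv_sum (s m : nat) : R :=
  \big[Rplus/0]_(y | (weight y == s) && (nparts y == m)) zinv y.

Lemma mult_le_weight y i : (i.+1 * y i <= weight y)%N.
Proof. by rewrite /weight (bigD1 i) //= leq_addr. Qed.

Lemma mult_le_nparts y i : (y i <= nparts y)%N.
Proof. by rewrite /nparts (bigD1 i) //= leq_addr. Qed.

Definition no_parts : multiplicities := [ffun => ord0].

Lemma weight_eq0 y : weight y = 0%N -> y = no_parts.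
Proof.
move=> w0; apply/ffunP => i; apply/val_inj; rewrite ffunE /=.
by have := mult_le_weight y i; rewrite w0 leqn0 muln_eq0 => /eqP.
Qed.

Lemma nparts_eq0 y : nparts y = 0%N -> y = no_parts.
Proof.
move=> p0; apply/ffunP => i; apply/val_inj; rewrite ffunE /=.
by have := mult_le_nparts y i; rewrite p0 leqn0 => /eqP.
Qed.

Lemma weight_no_parts : weight no_parts = 0%N.
Proof. by rewrite /weight big1 // => i _; rewrite ffunE muln0. Qed.

Lemma nparts_no_parts : nparts no_parts = 0%N.
Proof. by rewrite /nparts big1 // => i _; rewrite ffunE. Qed.

Lemma zinv_no_parts : zinv no_parts = 1.
Proof. by rewrite /zinv big1 // => i _; rewrite ffunE /= Rmult_1_l Rinv_1. Qed.

Lemma zinv_sum0 (m : nat) : zinv_sum 0 m = if m is 0 then 1 else 0.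
Proof.
have eq0 y : (weight y == 0%N) = (y == no_parts).
  by apply/eqP/eqP => [/weight_eq0 | ->] //; rewrite weight_no_parts.
rewrite /zinv_sum (eq_bigl (fun y => (y == no_parts) && (0%N == m))); last first.
  by move=> y; rewrite eq0; case: eqP => // ->; rewrite nparts_no_parts.
case: m => [|m]; last by rewrite big_pred0 // => y; rewrite andbF.
by rewrite (big_pred1 no_parts) ?zinv_no_parts // => y; rewrite andbT.
Qed.

Lemma zinv_sumS0 (s : nat) : zinv_sum s.+1 0 = 0.
Proof.
rewrite /zinv_sum big_pred0 // => y; apply/negP => /andP [/eqP ws /eqP /nparts_eq0 y0].
by move: ws; rewrite y0 weight_no_parts.
Qed.

Definition add_part i y : multiplicities :=
  [ffun j => if j == i then inord (y j).+1 else y j].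
Definition remove_part i y : multiplicities :=
  [ffun j => if j == i then inord (y j).-1 else y j].

Lemma add_partE i y j : (y i < n)%N -> add_part i y j = (y j + (j == i))%N :> nat.
Proof.
move=> lt_yi_n; rewrite ffunE; case: eqP => [->|_]; last by rewrite addn0.
by rewrite inordK // addn1.
Qed.

Lemma mult_max y i : (n <= y i)%N -> y i = n :> nat.
Proof. by move=> le_n_yi; apply/eqP; rewrite eqn_leq le_n_yi andbT -ltnS. Qed.

(* At full multiplicity [inord] wraps around: this case has weight > n. *)
Lemma add_part_full i y : (n <= y i)%N -> add_part i y i = 0%N :> nat.
Proof.
move/mult_max => yi_n.
by rewrite ffunE eqxx /inord /insubd insubF //= yi_n ltnn.
Qed.

Lemma weight_add_part i y : (y i < n)%N -> weight (add_part i y) = (weight y + i.+1)%N.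
Proof.
move=> lt_yi_n; rewrite /weight (bigD1 i) //= [in RHS](bigD1 i) //= add_partE // eqxx.
rewrite (eq_bigr (fun j : 'I_n => j.+1 * y j)%N); last first.
  by move=> j /negbTE ji; rewrite add_partE // ji addn0.
rewrite addn1 mulnS; lia.
Qed.

Lemma nparts_add_part i y : (y i < n)%N -> nparts (add_part i y) = (nparts y).+1.
Proof.
move=> lt_yi_n; rewrite /nparts (bigD1 i) //= [in RHS](bigD1 i) //= add_partE // eqxx.
rewrite (eq_bigr (fun j : 'I_n => (y j : nat))); last first.
  by move=> j /negbTE ji; rewrite add_partE // ji addn0.
by rewrite addn1 addSn.
Qed.

Lemma add_partK i y : (y i < n)%N -> remove_part i (add_part i y) = y.
Proof.
move=> lt_yi_n; apply/ffunP => j; rewrite !ffunE; case: eqP => [->|//].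
by apply/val_inj; rewrite /= !inordK // ltnS ltnW.
Qed.

Lemma remove_partK i y : (0 < y i)%N -> add_part i (remove_part i y) = y.
Proof.
move=> yi_gt0; apply/ffunP => j; rewrite !ffunE; case: eqP => [->|//].
have lt_yi : ((y i).-1 < n.+1)%N by have := ltn_ord (y i); lia.
by apply/val_inj; rewrite /= (inordK lt_yi) prednK // inordK.
Qed.

Lemma zinv_add_part i y : (y i < n)%N ->
  INR (i.+1 * add_part i y i) * zinv (add_part i y) = zinv y.
Proof.
move=> lt_yi_n; rewrite /zinv (bigD1 i) //= [in RHS](bigD1 i) //=.
rewrite (eq_bigr (fun j : 'I_n => / (INR j.+1 ^ y j * INR (fact (y j))))); last first.
  by move=> j /negbTE ji; rewrite ffunE ji.
rewrite add_partE // eqxx addn1 -Rmult_assoc; congr (_ * _).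
rewrite mult_INR fact_simpl mult_INR /=.
have := INR_fact_neq_0 (y i); have := INR_S_neq0 i; have := INR_S_neq0 (y i).
have := pow_nonzero (INR i.+1) (y i) (INR_S_neq0 i).
rewrite -!/(INR _.+1) => *; field; repeat split => //.
Qed.

(* Deleting one part [i+1] maps the [y] of weight [s] with [y i > 0] bijectively
   onto the [y] of weight [s - (i+1)] with one part less, and the factor
   [(i+1) y_i] turns [zinv] of the former into [zinv] of the latter. *)
Lemma sum_mult_zinv i (s m : nat) : (i.+1 <= s <= n)%N ->
  \big[Rplus/0]_(y | (weight y == s) && (nparts y == m.+1)) (INR (i.+1 * y i) * zinv y)
  = zinv_sum (s - i.+1) m.
Proof.
move=> /andP [le_i_s le_s_n].
rewrite (bigID (fun y => 0 < y i)%N) /= [X in _ + X]big1 ?Rplus_0_r; last first.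
  by move=> y /andP [_]; rewrite -eqn0Ngt => /eqP ->; rewrite muln0 Rmult_0_l.
rewrite (reindex_onto (add_part i) (remove_part i)) /=; last first.
  by move=> y /andP [_]; apply: remove_partK.
apply: eq_big => y; last first.
  move=> /andP [/andP [_ pos] _]; case: (ltnP (y i) n) => [|le_n_yi].
    exact: zinv_add_part.
  by move: pos; rewrite add_part_full.
case: (ltnP (y i) n) => [lt_yi_n | le_n_yi].
  rewrite weight_add_part // nparts_add_part // add_partK // eqxx andbT.
  rewrite add_partE // eqxx addn1 andbT eqSS; congr andb; apply/eqP/eqP; lia.
rewrite add_part_full // andbF; symmetry; apply/negbTE/nandP; left.
apply/eqP => wy; have := mult_le_weight y i; rewrite wy (mult_max _ _ le_n_yi); nia.
Qed.

Lemma zinv_sum_rec (s m : nat) : (s <= n)%N ->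
  INR s * zinv_sum s m.+1 = \big[Rplus/0]_(j < s) zinv_sum j m.
Proof.
move=> le_s_n; rewrite /zinv_sum big_distrr /=.
rewrite (eq_bigr (fun y => \big[Rplus/0]_(i < n) (INR (i.+1 * y i) * zinv y))); last first.
  by move=> y /andP [/eqP <- _]; rewrite /weight INR_sum big_distrl.
rewrite exchange_big /= (eq_bigr (fun i : 'I_n =>
  if (i.+1 <= s)%N then zinv_sum (s - i.+1) m else 0)); last first.
  move=> i _; case: ifP => le_i_s; first by apply: sum_mult_zinv; rewrite le_i_s.
  apply: big1 => y /andP [/eqP wy _]; have := mult_le_weight y i.
  rewrite wy => le_w; have -> : y i = 0%N :> nat by move/negbT: le_i_s; nia.
  by rewrite muln0 Rmult_0_l.
rewrite -big_mkcond /= -(big_ord_widen _ (fun i : nat => zinv_sum (s - i.+1)%N m) le_s_n).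
by rewrite -(big_mkord xpredT (zinv_sum ^~ m)) big_rev_mkord subn0.
Qed.

Lemma zinv_sum_stirling1 (s m : nat) : (s <= n)%N ->
  zinv_sum s m = INR (stirling1 s m) / INR (fact s).
Proof.
elim: s {-2}s (leqnn s) m => [|s IH] s'.
  by rewrite leqn0 => /eqP -> [|m] _; rewrite zinv_sum0 /=; field.
rewrite leq_eqVlt => /orP [/eqP -> [|m] le_s_n | ]; last by rewrite ltnS; apply: IH.
  by rewrite zinv_sumS0 /= /Rdiv Rmult_0_l.
apply: (Rmult_eq_reg_l (INR s.+1)); last exact: INR_S_neq0.
rewrite zinv_sum_rec // stirling1_div_fact_sum; apply: eq_bigr => j _.
apply: IH; first by rewrite -ltnS.
by apply: leq_trans le_s_n; apply: ltnW.
Qed.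

End PartitionSums.

Lemma partition_sum_stirling1 (n : nat) (x : R) : partition_sum n x =
  \big[Rplus/0]_(m < n.+1)
    (INR (fact m) / ln x ^ m * (INR (stirling1 n m) / INR (fact n))).
Proof.
have le_nparts (y : {ffun 'I_n -> 'I_n.+1}) : is_partition y -> (nparts y <= n)%N.
  move=> /eqP wy; rewrite -[X in (_ <= X)%N]wy; apply: leq_sum => i _.
  exact: leq_pmull.
rewrite /partition_sum (partition_big (fun y => inord (nparts y) : 'I_n.+1) xpredT) //=.
apply: eq_bigr => m _; rewrite -(@zinv_sum_stirling1 n n m (leqnn n)) /zinv_sum big_distrr /=.
apply: eq_big => [y | y /andP [py /eqP <-]]; last by rewrite inordK // ltnS le_nparts.
rewrite /is_partition -/(weight n y); case py: (weight n y == n) => //=.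
have le_y := le_nparts y py.
by apply/eqP/eqP => [<- | e]; [rewrite inordK | apply/val_inj; rewrite /= inordK // e].
Qed.

Lemma is_derive_big {I : Type} (r : seq I) (f : I -> R -> R) (df : I -> R) (y : R) :
  (forall i, is_derive (f i) y (df i)) ->
  is_derive (fun t => \big[Rplus/0]_(i <- r) f i t) y (\big[Rplus/0]_(i <- r) df i).
Proof.
move=> df_f; elim: r => [|i r IH].
  apply: (is_derive_ext (fun _ => 0)) => [t|]; first by rewrite big_nil.
  by rewrite big_nil; apply: is_derive_const.
apply: (is_derive_ext (fun t => f i t + \big[Rplus/0]_(j <- r) f j t)) => [t|].
  by rewrite big_cons.
by rewrite big_cons; apply: is_derive_plus.
Qed.

Lemma is_derive_n_iter (U : R -> Prop) (f : R -> R) (g : nat -> R -> R) :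
  open U -> (forall t, U t -> f t = g 0%N t) ->
  (forall k t, U t -> is_derive (g k) t (g k.+1 t)) ->
  forall n x, U x -> is_derive_n f n x (g n x).
Proof.
move=> oU f_g0 dg.
have g_near k x : U x -> locally x (fun t => g k t = Derive_n f k t).
  move=> Ux; apply: filter_imp (oU x Ux) => t; move: t.
  elim: k => [|k IH] t Ut /=; first by rewrite f_g0.
  rewrite (Derive_ext_loc _ (g k)); last first.
    by apply: filter_imp (oU t Ut) => s Us; rewrite IH.
  by rewrite (is_derive_unique _ _ _ (dg k t Ut)).
case=> [|n] x Ux /=; first exact: f_g0.
exact: is_derive_ext_loc (g_near n x Ux) (dg n x Ux).
Qed.

Lemma is_derive_inv_pow_inv_ln (n m : nat) (y : R) : 0 < y -> ln y <> 0 ->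
  is_derive (fun t => (/ t) ^ n * (/ ln t) ^ m.+1) y
    (- (/ y) ^ n.+1 * (INR n * (/ ln y) ^ m.+1 + INR m.+1 * (/ ln y) ^ m.+2)).
Proof.
move=> y_gt0 lny_neq0; have y_neq0 : y <> 0 by lra.
have d_inv : is_derive (fun t => / t) y (- / y ^ 2).
  by auto_derive => //; field.
have d_inv_ln : is_derive (fun t => / ln t) y (- / y / ln y ^ 2).
  by auto_derive => //; field.
have := is_derive_mult _ _ _ _ _
  (is_derive_pow _ n _ _ d_inv) (is_derive_pow _ m.+1 _ _ d_inv_ln) Rmult_comm.
congr is_derive; rewrite /plus /mult /= /AbelianMonoid.plus /Ring.mult /= -/(INR m.+1).
case: n => [|n] /=; first by field.
rewrite -/(INR n.+1); move: ((/ y) ^ n) ((/ ln y) ^ m) => p q; field; split => //.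
Qed.

Definition stirling_coef (n m : nat) : R := INR (stirling1 n m) * INR (fact m).

Lemma stirling_coefSS (n m : nat) :
  stirling_coef n.+1 m.+1 = INR n * stirling_coef n m.+1 + INR m.+1 * stirling_coef n m.
Proof. by rewrite /stirling_coef stirling1SS plus_INR mult_INR fact_simpl mult_INR; ring. Qed.

Lemma stirling_coefS0 (n : nat) : stirling_coef n.+1 0 = INR n * stirling_coef n 0.
Proof. by case: n => [|n]; rewrite /stirling_coef /= ?Rmult_0_l ?Rmult_0_r. Qed.

Lemma stirling_coef_small (n m : nat) : (n < m)%N -> stirling_coef n m = 0.
Proof. by move=> lt_nm; rewrite /stirling_coef stirling1_small // Rmult_0_l. Qed.

Lemma stirling_coef_poly_rec (n : nat) (u : R) :
  \big[Rplus/0]_(0 <= m < n.+2) (stirling_coef n.+1 m * u ^ m.+1) =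
  \big[Rplus/0]_(0 <= m < n.+1)
    (stirling_coef n m * (INR n * u ^ m.+1 + INR m.+1 * u ^ m.+2)).
Proof.
have shift : stirling_coef n 0 * u ^ 1 +
    \big[Rplus/0]_(0 <= m < n.+1) (stirling_coef n m.+1 * u ^ m.+2) =
    \big[Rplus/0]_(0 <= m < n.+1) (stirling_coef n m * u ^ m.+1).
  by rewrite big_nat_recr // [RHS]big_nat_recl // (@stirling_coef_small n n.+1) //=; ring.
rewrite big_nat_recl // stirling_coefS0.
rewrite (eq_bigr (fun m => INR n * (stirling_coef n m.+1 * u ^ m.+2) +
  INR m.+1 * stirling_coef n m * u ^ m.+2)) => [|m _]; last by rewrite stirling_coefSS; ring.
rewrite [RHS](eq_bigr (fun m => INR n * (stirling_coef n m * u ^ m.+1) +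
  INR m.+1 * stirling_coef n m * u ^ m.+2)) => [|m _]; last by ring.
by rewrite !big_split -!big_distrr -shift /=; ring.
Qed.

Definition inv_ln_nth_derivative (n : nat) (t : R) : R :=
  (-1) ^ n * \big[Rplus/0]_(0 <= m < n.+1)
    (stirling_coef n m * ((/ t) ^ n * (/ ln t) ^ m.+1)).

Lemma inv_ln_nth_derivative0 (t : R) : ln t <> 0 -> inv_ln_nth_derivative 0 t = / ln t.
Proof.
move=> lnt_neq0.
by rewrite /inv_ln_nth_derivative big_nat1 /stirling_coef /=; field.
Qed.

Lemma is_derive_inv_ln_nth_derivative (n : nat) (y : R) : 0 < y -> ln y <> 0 ->
  is_derive (inv_ln_nth_derivative n) y (inv_ln_nth_derivative n.+1 y).
Proof.
move=> y_gt0 lny_neq0.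
have := is_derive_scal _ _ ((-1) ^ n) _ (is_derive_big (index_iota 0 n.+1) _ _ y
  (fun m => is_derive_scal _ _ (stirling_coef n m) _
    (is_derive_inv_pow_inv_ln n m y y_gt0 lny_neq0))).
congr is_derive; rewrite /inv_ln_nth_derivative.
set v := (/ y) ^ n.+1; set u := / ln y.
rewrite (eq_bigr (fun m => - v * (stirling_coef n m *
  (INR n * u ^ m.+1 + INR m.+1 * u ^ m.+2)))) => [|m _]; last by ring.
rewrite [in RHS](eq_bigr (fun m => v * (stirling_coef n.+1 m * u ^ m.+1))) => [|m _].
  by rewrite -!big_distrr stirling_coef_poly_rec /=; ring.
by rewrite /v /=; ring.
Qed.

Lemma inv_ln_nth_derivative_partition_sum (A : R) (n : nat) (x : R) : 0 < x -> x <> 1 ->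
  ln A * inv_ln_nth_derivative n x =
  logb x A * ((-1) ^ n * INR (fact n) / x ^ n) * partition_sum n x.
Proof.
move=> x_gt0 x_neq1; have lnx_neq0 := ln_neq_0 x x_neq1 x_gt0.
rewrite partition_sum_stirling1 /inv_ln_nth_derivative big_mkord !big_distrr /=.
apply: eq_bigr => m _; rewrite /logb /stirling_coef !pow_inv.
have := INR_fact_neq_0 n; have := pow_nonzero (ln x) m lnx_neq0.
have : x ^ n <> 0 by apply: pow_nonzero; lra.
by move=> *; field.
Qed.

Lemma open_pos_neq1 : open (fun t => 0 < t /\ t <> 1).
Proof. exact: open_and (open_gt 0) (open_neq 1). Qed.

End LogbDerivative.
Import LogbDerivative.

Theorem proposition4p4 (a n : nat) (x : R) :
  (0 < a)%nat -> (0 < x)%R -> x <> 1%R ->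
  is_derive_n (fun t => logb t (INR a)) n x
    (logb x (INR a) * (pow (-1) n * INR (Factorial.fact n) / pow x n) * partition_sum n x)%R.
Proof.
  intros _ x_gt0 x_neq1.
  rewrite <- inv_ln_nth_derivative_partition_sum by assumption.
  apply is_derive_n_scal_l.
  apply (is_derive_n_iter (fun t => 0 < t /\ t <> 1)); auto using open_pos_neq1.
  - intros t [t_gt0 t_neq1].
    symmetry; apply inv_ln_nth_derivative0, ln_neq_0; assumption.
  - intros k t [t_gt0 t_neq1].
    apply is_derive_inv_ln_nth_derivative; [| apply ln_neq_0]; assumption.
Qed.
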